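(* Let $T$ be the rooted binary tree with boundary $\partial T=\{0,1\}^{\mathbb N}$, let $\mu_1$ be the Bernoulli measure on $\partial T$, and let $\lambda$ be Lebesgue measure on $I=[0,1)$. Let $g\in Aut(T)$ be such that there exists $m\geq1$ such that for every $i>m$ and every sequence $w=w_1w_2\cdots\in\partial T$, the $i$-th entry of $g(w)$ equals $w_i$. Let $a\in Aut(T)$ be the adding machine. Then: (1) for some permutation $\pi$ of $2^m$ symbols, the rotated odometer $(I,F_\pi)$ (with $F_\pi$ built from the division of $I$ into $2^m$ intervals of length $2^{-m}$) admits an injective measure-preserving map $\phi:(I,\lambda)\to(\partial T,\mu_1)$ with $\phi\circ F_\pi=(a\circ g)\circ\phi$; (2) consequently, $a\circ g$ has infinite order, there is a clopen subset $U\subset\partial T$ such that the action of $\langle a\circ g\rangle$ restricted to $U$ is minimal, and there is $n_0\geq0$ such that every $x\in\partial T\setminus U$ is periodic of period $2^k$ for some $k\leq n_0$.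
   Context: The rooted binary tree $T$ has vertex levels $V_i$, $|V_i|=2^i$, vertices of $V_i$ labelled by words $w_1\cdots w_i\in\{0,1\}^i$, with $w_1\cdots w_i$ joined to $w_1\cdots w_i0$ and $w_1\cdots w_i1$. Its boundary $\partial T$ is the set of infinite paths, identified with $\{0,1\}^{\mathbb N}$. $Aut(T)$ is the group of bijections of vertices preserving adjacency (hence levels); each induces a homeomorphism of $\partial T$. The Bernoulli measure $\mu_1$ gives each cylinder $[w_1\cdots w_i]$ mass $2^{-i}$. The adding machine $a$ is addition of $1$ with carry to the right: $a(0w_2\cdots)=1w_2\cdots$; if $w_1=\cdots=w_k=1$, $w_{k+1}=0$ then $a(w)=0^k1w_{k+2}\cdots$; $a(1^\infty)=0^\infty$. Rotated odometer: the von Neumann–Kakutani map $\mathfrak{a}:[0,1)\to[0,1)$ is $\mathfrak{a}(x)=x-(1-3\cdot2^{-n})$ for $x\in[1-2^{1-n},1-2^{-n})$, $n\ge1$; for $q\in\mathbb N$ and a permutation $\pi$ of $q$ symbols, $R_\pi$ translates $[k/q,(k+1)/q)$ onto $[\pi(k)/q,(\pi(k)+1)/q)$; $F_\pi=\mathfrak{a}\circ R_\pi$. *)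

From HB Require Import structures.
From mathcomp Require Import all_boot all_order all_algebra all_fingroup.
From mathcomp Require Import all_classical all_reals all_analysis.
Set Implicit Arguments. Unset Strict Implicit. Unset Printing Implicit Defensive.
Import Order.TTheory GRing.Theory Num.Theory.
Import numFieldNormedType.Exports.
Local Open Scope classical_set_scope.
Local Open Scope ring_scope.

(* Vertices of T are finite binary words (seq bool); the word w_1...w_i is
   the list [:: w_1; ...; w_i], its level is its size, and w is joined to
   rcons w b for b in {0,1} (false = 0, true = 1). *)
Definition tree_adj (u v : seq bool) : Prop :=
  (exists b, v = rcons u b) \/ (exists b, u = rcons v b).

Definition is_tree_aut (f : seq bool -> seq bool) : Prop :=
  bijective f /\ forall u v, tree_adj u v <-> tree_adj (f u) (f v).

(* An infinite path is a sequence x : nat -> bool, with x i the (i+1)-th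
   letter (so the paper's w_i is x (i-1)).  We use mathcomp-analysis'
   cantor_space (= nat -> bool with the product topology). *)
Definition prefix (x : cantor_space) (n : nat) : seq bool := mkseq x n.

Definition bd_act (f : seq bool -> seq bool) (x : cantor_space) : cantor_space :=
  fun i => nth false (f (prefix x i.+1)) i.

(* The adding machine a: addition of 1 with carry to the right. *)
Definition adding_machine (x : cantor_space) : cantor_space :=
  fun i => if [forall j : 'I_i, x j] then ~~ x i else x i.

Definition cylinder (w : seq bool) : set cantor_space :=
  [set x | prefix x (size w) = w].

Definition cylinders : set (set cantor_space) := [set cylinder w | w in [set: seq bool]].

(* dT as a measurable space: the sigma-algebra generated by cylinders
   (= Borel sigma-algebra of the product topology). *)
Definition bdT := g_sigma_algebraType cylinders.

(* mu is the Bernoulli measure mu_1: each cylinder [w] has mass 2^-|w|.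
   (This determines mu uniquely.) *)
Definition is_bernoulli_measure (R : realType)
  (mu : {measure set bdT -> \bar R}) : Prop :=
  forall w : seq bool, mu (cylinder w) = ((2%:R : R) ^- size w)%:E.

Definition vNK_level (R : realType) (x : R) (n : nat) : Prop :=
  (1 <= n)%N /\ 1 - (2%:R : R) ^- n.-1 <= x /\ x < 1 - (2%:R : R) ^- n.

Definition vNK_index (R : realType) (x : R) : nat := xget 1%N (vNK_level x).

Definition vNK (R : realType) (x : R) : R :=
  x - (1 - 3%:R * (2%:R : R) ^- vNK_index x).

Definition rot_pi (R : realType) (q : nat) (pi : {perm 'I_q}) (x : R) : R :=
  let k := Num.truncn (x * q%:R) in
  match @insub _ (fun k => (k < q)%N) 'I_q k with
  | Some i => x + ((pi i)%:R - k%:R) / q%:R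
  | None => x
  end.

Definition rot_odometer (R : realType) (q : nat) (pi : {perm 'I_q}) (x : R) : R :=
  vNK (rot_pi pi x).

(* the <h>-orbit of x, for a bijection h: { h^k x | k in Z } *)
Definition zorbit (T : Type) (h : T -> T) (x : T) : set T :=
  [set y | exists n : nat, y = iter n h x \/ x = iter n h y].

Definition has_period (T : Type) (h : T -> T) (x : T) (p : nat) : Prop :=
  (0 < p)%N /\ iter p h x = x /\ forall j, (0 < j < p)%N -> iter j h x <> x.

From Pilot Require Import Defs.
From HB Require Import structures.
From mathcomp Require Import all_boot all_order all_algebra all_fingroup.
From mathcomp Require Import all_classical all_reals all_analysis.
From mathcomp Require Import zify ring lra.
Import Order.TTheory GRing.Theory Num.Theory.
Import numFieldNormedType.Exports.
Set Implicit Arguments. Unset Strict Implicit. Unset Printing Implicit Defensive.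
Local Open Scope classical_set_scope.
Local Open Scope nat_scope.
Local Notation prefix := Defs.prefix.

(* Write a path as [u t] with [u] its first [m] letters.  Since [g] fixes
   every letter beyond [m], [h = a o g] permutes the words [u] and adds 1 to
   the tail [t] exactly when [g u = 1^m], i.e. when [u = g^-1 (1^m)].  The
   level-[m] action of [h] lies in a 2-group, so the cycle of [g^-1 (1^m)] has
   length [p] dividing [2 ^ m], and [h ^ p] acts on the tails of the points of
   that cycle as the odometer.  The union [U] of these cylinders is therefore
   clopen, invariant and minimal, and [h] has infinite order; off [U] the tail
   never moves, so each point is periodic with the period of its prefix.
   For (1), the binary expansion carries Lebesgue measure on [0, 1) to the
   Bernoulli measure, the von Neumann-Kakutani map to [a], and the rotation
   [R_pi] of the dyadic intervals of length [2 ^- m], [pi] being the action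
   of [g] on level [m], to [g]. *)

Lemma prefixP (x y : cantor_space) n :
  prefix x n = prefix y n <-> (forall i, i < n -> x i = y i).
Proof.
split=> [e i lt_in|e].
  by have := congr1 (nth false ^~ i) e; rewrite /= !nth_mkseq.
apply/eq_in_map => i; rewrite mem_iota add0n => /andP[_]; exact: e.
Qed.

Lemma eq_prefixW (x y : cantor_space) n k : k <= n ->
  prefix x n = prefix y n -> prefix x k = prefix y k.
Proof.
by move=> le_kn /prefixP e; apply/prefixP => i lt_ik; apply: e; exact: leq_trans le_kn.
Qed.

Lemma size_prefix (x : cantor_space) n : size (prefix x n) = n.
Proof. exact: size_mkseq. Qed.

Lemma prefixS (x : cantor_space) n : prefix x n.+1 = rcons (prefix x n) (x n).
Proof. exact: mkseqS. Qed.

Lemma nth_prefix (x : cantor_space) n i : i < n -> nth false (prefix x n) i = x i.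
Proof. exact: nth_mkseq. Qed.

Definition shift (m : nat) (x : cantor_space) : cantor_space := fun k => x (m + k).

Lemma prefixD (x : cantor_space) m k :
  prefix x (m + k) = prefix x m ++ prefix (shift m x) k.
Proof.
rewrite /Defs.prefix /mkseq iotaD map_cat add0n; congr (_ ++ _).
by rewrite -{1}(addn0 m) iotaDl -map_comp.
Qed.

Lemma forall_prefix (x : cantor_space) i :
  [forall j : 'I_i, x j] = all id (prefix x i).
Proof.
apply/forallP/allP => [all_x b /mapP[j]|all_x j].
  by rewrite mem_iota add0n => /andP[_ lt_ji] ->; exact: (all_x (Ordinal lt_ji)).
by apply: all_x; apply/mapP; exists (nat_of_ord j); rewrite // mem_iota add0n ltn_ord.
Qed.

(* [s w] says whether [f] swaps the two subtrees hanging below the vertex [w]. *)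
Definition has_portrait (f : cantor_space -> cantor_space) :=
  exists s : seq bool -> bool, forall x n, f x n = x n (+) s (prefix x n).

Lemma portrait_prefix f : has_portrait f -> forall x y n,
  prefix x n = prefix y n -> prefix (f x) n = prefix (f y) n.
Proof.
move=> [s fs] x y n /prefixP e; apply/prefixP => i lt_in.
rewrite !fs e //; congr (_ (+) s _); apply/prefixP => j lt_ji.
by apply: e; exact: ltn_trans lt_in.
Qed.

Lemma has_portrait_comp f1 f2 :
  has_portrait f1 -> has_portrait f2 -> has_portrait (f2 \o f1).
Proof.
move=> [s1 f1s] [s2 f2s].
pose image1 (w : seq bool) :=
  mkseq (fun i => nth false w i (+) s1 (take i w)) (size w).
have prefix_f1 x n : prefix (f1 x) n = image1 (prefix x n).
  rewrite /image1 size_prefix; apply/eq_in_map => i.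
  rewrite mem_iota add0n => /andP[_ lt_in].
  rewrite f1s nth_prefix //; congr (_ (+) s1 _).
  by rewrite /Defs.prefix -map_take take_iota; congr (map _ (iota _ _)); lia.
exists (fun w => s1 w (+) s2 (image1 w)) => x n /=.
by rewrite f2s f1s prefix_f1 addbA.
Qed.

Lemma has_portrait_iter f n : has_portrait f -> has_portrait (iter n f).
Proof.
move=> pf; elim: n => [|n IH] /=; first by exists (fun=> false) => x k; rewrite addbF.
by have [s fs] := has_portrait_comp IH pf; exists s => x k; exact: fs.
Qed.

(* [f ^ (2 ^ n)] fixes the first [n] letters, so in [f ^ (2 ^ n.+1)] the
   portrait flips letter [n] twice by the same bit. *)
Lemma prefix_iter_exp2 f : has_portrait f ->
  forall n x, prefix (iter (2 ^ n) f x) n = prefix x n.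
Proof.
move=> pf; elim=> [|n IH] x //.
have [s fs] := has_portrait_iter (2 ^ n) pf.
rewrite expnS mul2n -addnn iterD !prefixS IH IH; congr rcons.
by rewrite fs fs IH -addbA addbb addbF.
Qed.

Lemma adding_machine_portrait : has_portrait adding_machine.
Proof.
exists (all id) => x n; rewrite /adding_machine forall_prefix.
by case: (all _ _); case: (x n).
Qed.

Lemma tree_adj_nil v : tree_adj v [::] -> exists c, v = [:: c].
Proof.
case=> [[c e]|[c e]]; last by exists c.
by have := congr1 size e; rewrite size_rcons.
Qed.

Section TreeAutomorphism.
Variable g : seq bool -> seq bool.
Hypothesis g_aut : is_tree_aut g.

Lemma tree_aut_inj : injective g.
Proof. by case: g_aut => -[g' gK _] _; exact: can_inj gK. Qed.

(* The root is the only vertex with fewer than three neighbours. *)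
Lemma tree_aut_root : g [::] = [::].
Proof.
case: g_aut => -[g' gK g'K] adj.
case/lastP E: (g [::]) => [//|u b].
have nbr v : tree_adj v (g [::]) -> exists c, g [:: c] = v.
  rewrite -{1}[v]g'K => /(iffRL (adj _ _))/tree_adj_nil[c e].
  by exists c; rewrite -e g'K.
have [c1 e1] : exists c, g [:: c] = u by apply: nbr; rewrite E; left; exists b.
have [c2 e2] : exists c, g [:: c] = rcons (rcons u b) false.
  by apply: nbr; rewrite E; right; exists false.
have [c3 e3] : exists c, g [:: c] = rcons (rcons u b) true.
  by apply: nbr; rewrite E; right; exists true.
have: [/\ c1 != c2, c1 != c3 & c2 != c3].
  split; apply/eqP => e.
  - by move: e2; rewrite -e e1 => /(congr1 size); rewrite !size_rcons; lia.
  - by move: e3; rewrite -e e1 => /(congr1 size); rewrite !size_rcons; lia.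
  - by move: e3; rewrite -e e2 => /rcons_inj.
by case: c1 c2 c3 {e1 e2 e3} => [] [] [] [].
Qed.

Lemma tree_aut_rcons u b : exists c, g (rcons u b) = rcons (g u) c.
Proof.
case: g_aut => _ adj.
have: tree_adj (g u) (g (rcons u b)) by apply: (iffLR (adj _ _)); left; exists b.
case=> [[c e]|[c e]]; first by exists c.
exfalso; elim/last_ind: u b c e => [|w d IH] b c e.
  by move: e; rewrite tree_aut_root => /(congr1 size); rewrite size_rcons.
have [d' ed] : exists d', g (rcons w d) = rcons (g w) d'.
  have /(iffLR (adj _ _)) [//|[d' ed]] : tree_adj w (rcons w d) by left; exists d.
  by case: (IH _ _ ed).
move: e; rewrite ed => /rcons_inj[/tree_aut_inj /(congr1 size)].
by rewrite !size_rcons; lia.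
Qed.

Lemma size_tree_aut u : size (g u) = size u.
Proof.
elim/last_ind: u => [|u b IH]; first by rewrite tree_aut_root.
by have [c ->] := tree_aut_rcons u b; rewrite !size_rcons IH.
Qed.

Lemma bd_act_prefix x n : prefix (bd_act g x) n = g (prefix x n).
Proof.
elim: n => [|n IH]; first by rewrite tree_aut_root.
rewrite prefixS IH /bd_act prefixS.
have [c ->] := tree_aut_rcons (prefix x n) (x n).
by rewrite nth_rcons size_tree_aut size_prefix ltnn eqxx.
Qed.

Lemma bd_act_portrait : has_portrait (bd_act g).
Proof.
exists (fun u => nth false (g (rcons u false)) (size u)) => x n.
rewrite /bd_act prefixS.
have [c1 e1] := tree_aut_rcons (prefix x n) (x n).
have [c0 e0] := tree_aut_rcons (prefix x n) false.
rewrite e1 e0 !nth_rcons !size_tree_aut size_prefix ltnn eqxx.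
case: (x n) e1 => e1 /=; last by move: e1; rewrite e0 => /rcons_inj[].
have : c1 != c0.
  apply/eqP => c10; have /tree_aut_inj/rcons_inj[] // :
    g (rcons (prefix x n) true) = g (rcons (prefix x n) false) by rewrite e1 e0 c10.
by case: c1 c0 {e1 e0} => [] [].
Qed.

End TreeAutomorphism.

Definition odo_val (t : cantor_space) K := \sum_(i < K) t i * 2 ^ i.

Lemma odo_valS t K : odo_val t K.+1 = odo_val t K + t K * 2 ^ K.
Proof. by rewrite /odo_val big_ord_recr. Qed.

Lemma odo_val_lt t K : odo_val t K < 2 ^ K.
Proof.
elim: K => [|K IH]; first by rewrite /odo_val big_ord0.
by rewrite odo_valS expnS; case: (t K); lia.
Qed.

Lemma all_prefix_odo_val t K : all id (prefix t K) = ((odo_val t K).+1 == 2 ^ K).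
Proof.
elim: K => [|K IH]; first by rewrite /odo_val big_ord0.
rewrite prefixS all_rcons odo_valS IH expnS.
by have := odo_val_lt t K; case: (t K) => /= ?; apply/eqP/eqP; lia.
Qed.

Lemma odo_val_adding_machine t K :
  odo_val (adding_machine t) K = (odo_val t K).+1 %% 2 ^ K.
Proof.
elim: K => [|K IH]; first by rewrite /odo_val big_ord0 modn1.
rewrite !odo_valS IH {1}/adding_machine forall_prefix all_prefix_odo_val expnS.
have := odo_val_lt t K; have := expn_gt0 2 K.
move: (2 ^ K) (odo_val t K) => N v N_gt0 lt_vN.
case: eqP => [eN|neN].
  rewrite eN modnn; case: (t K) => /=; rewrite ?mul1n ?mul0n add0n.
    by rewrite -addSn eN addnn -mul2n modnn.
  by rewrite addn0 eN modn_small //; lia.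
rewrite (modn_small (m := v.+1)); last by lia.
by case: (t K); rewrite /= ?mul1n ?mul0n modn_small //; lia.
Qed.

Lemma odo_val_iter t j K :
  odo_val (iter j adding_machine t) K = (odo_val t K + j) %% 2 ^ K.
Proof.
elim: j => [|j IH]; first by rewrite addn0 modn_small ?odo_val_lt.
by rewrite [LHS]/= odo_val_adding_machine IH addnS -addn1 modnDml addn1.
Qed.

Lemma odo_val_inj t t' K : odo_val t K = odo_val t' K -> prefix t K = prefix t' K.
Proof.
elim: K => [|K IH] // E; rewrite !odo_valS in E.
have [eK ev] : t K = t' K /\ odo_val t K = odo_val t' K.
  move: E (odo_val_lt t K) (odo_val_lt t' K).
  by case: (t K); case: (t' K) => /= E l1 l2; split; lia.
by rewrite !prefixS (IH ev) eK.
Qed.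

Lemma odometer_reach t v K : exists j, prefix (iter j adding_machine t) K = prefix v K.
Proof.
exists (odo_val v K + 2 ^ K - odo_val t K); apply: odo_val_inj.
rewrite odo_val_iter; have := odo_val_lt t K; have := odo_val_lt v K.
move: (2 ^ K) (odo_val t K) (odo_val v K) => N a b lt_bN lt_aN.
by rewrite (_ : a + (b + N - a) = b + N) ?modnDr ?modn_small //; lia.
Qed.

Lemma odometer_aperiodic t j : 0 < j -> iter j adding_machine t <> t.
Proof.
move=> j_gt0 E; have := odo_val_iter t j j; rewrite E.
have := ltn_expl j (isT : 1 < 2); have := odo_val_lt t j.
move: (2 ^ j) (odo_val t j) => N v lt_vN lt_jN.
have [lt_N|ge_N] := ltnP (v + j) N; first by rewrite modn_small //; lia.
by rewrite -(subnK ge_N) modnDr modn_small; lia.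
Qed.

Lemma open_prefix_eq (x : cantor_space) k :
  open [set y : cantor_space | prefix y k = prefix x k].
Proof.
elim: k => [|k IH].
  by rewrite (_ : [set y | _] = setT); [exact: openT | apply/seteqP].
rewrite (_ : [set y | _] = [set y | prefix y k = prefix x k] `&` proj k @^-1` [set x k]).
  apply: openI => //; apply: open_comp => [+ _|]; first exact: proj_continuous.
  exact: discrete_open.
apply/seteqP; split => y /=; rewrite !prefixS.
  by move/rcons_inj => -[e1 e2]; split => //; exact: e2.
by rewrite /proj => -[-> ->].
Qed.

Lemma nbhs_prefix (y : cantor_space) (B : set cantor_space) : nbhs y B ->
  exists N, forall z, prefix z N = prefix y N -> B z.
Proof.
pose F := filter_from [set: nat]
  (fun N => [set z : cantor_space | prefix z N = prefix y N]).
have F_filter : Filter F.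
  apply: filter_from_filter; first by exists 0.
  move=> i j _ _; exists (maxn i j) => // z /= e.
  by split; apply: eq_prefixW e; rewrite ?leq_maxl ?leq_maxr.
suff F_y : F --> y by move=> /F_y [N _ sub]; exists N => z; exact: sub.
have [_] := @cvg_sup cantor_space nat (fun i => Topological.class
  (initial_topology (fun f : cantor_space => f i))) F y F_filter.
apply => i A; rewrite (@nbhsE (initial_topology (fun f : cantor_space => f i))) /=.
move=> -[W [oW Wy] WA]; case: oW => O _ EO; exists i.+1 => //= z /prefixP e.
by apply: WA; rewrite -EO /= e //; move: Wy; rewrite -EO.
Qed.

Lemma prefix_invariant_open (S : set cantor_space) k :
  (forall x y, prefix x k = prefix y k -> S x -> S y) -> open S.
Proof.
move=> S_inv; rewrite openE => x Sx.
apply: (@filterS _ _ _ [set y | prefix y k = prefix x k]).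
  by move=> y e; exact: S_inv (esym e) Sx.
by apply: open_nbhs_nbhs; split; [exact: open_prefix_eq|].
Qed.

Lemma prefix_invariant_closed (S : set cantor_space) k :
  (forall x y, prefix x k = prefix y k -> S x -> S y) -> closed S.
Proof.
move=> S_inv; rewrite -[S]setCK; apply: open_closedC; apply: (@prefix_invariant_open _ k).
by move=> x y e nSx Sy; apply: nSx; exact: S_inv (esym e) Sy.
Qed.

Lemma setI_cylinder (u v : seq bool) :
  [\/ cylinder u `&` cylinder v = set0, cylinder u `&` cylinder v = cylinder u |
      cylinder u `&` cylinder v = cylinder v].
Proof.
have [[x [xu xv]]|disj] := pselect (exists x, cylinder u x /\ cylinder v x); last first.
  by apply: Or31; apply/seteqP; split => // y [yu yv]; apply: disj; exists y.
case/orP: (leq_total (size u) (size v)) => le_uv; [apply: Or33 | apply: Or32].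
  apply: setIidr => y yv; rewrite /cylinder /= -[RHS]xu.
  by apply: (eq_prefixW le_uv); rewrite yv xv.
apply: setIidl => y yu; rewrite /cylinder /= -[RHS]xv.
by apply: (eq_prefixW le_uv); rewrite yu xu.
Qed.

Section SkewOdometer.
Variables (h : cantor_space -> cantor_space) (m : nat) (ws : seq bool).
Hypothesis h_portrait : has_portrait h.
Hypothesis size_ws : size ws = m.
Hypothesis shift_h : forall x,
  shift m (h x) = if prefix x m == ws then adding_machine (shift m x) else shift m x.

Local Notation P x := (prefix x m).

Lemma prefix_iter n x y : P x = P y -> P (iter n h x) = P (iter n h y).
Proof. exact: portrait_prefix (has_portrait_iter n h_portrait) x y m. Qed.

Lemma prefix_iter_exp2_mul k x : P (iter (2 ^ m * k) h x) = P x.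
Proof.
elim: k x => [|k IH] x; first by rewrite muln0.
by rewrite mulnS iterD (prefix_iter_exp2 h_portrait) IH.
Qed.

Lemma prefix_return x : exists n, (0 < n) && (P (iter n h x) == P x).
Proof. by exists (2 ^ m); rewrite expn_gt0 (prefix_iter_exp2 h_portrait) eqxx. Qed.

Definition period x := ex_minn (prefix_return x).

Lemma periodP x : [/\ 0 < period x, P (iter (period x) h x) = P x &
  forall n, 0 < n -> P (iter n h x) = P x -> period x <= n].
Proof.
rewrite /period; case: ex_minnP => p /andP[p_gt0 /eqP p_ret] p_min.
by split => // n n_gt0 n_ret; apply: p_min; rewrite n_gt0 n_ret eqxx.
Qed.

Lemma prefix_iter_mod x n : P (iter n h x) = P (iter (n %% period x) h x).
Proof.
have [_ p_ret _] := periodP x.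
have ret_mul q : P (iter (q * period x) h x) = P x.
  by elim: q => // q IH; rewrite mulSn iterD (prefix_iter _ IH) p_ret.
by rewrite {1}(divn_eq n (period x)) addnC iterD (prefix_iter _ (ret_mul _)).
Qed.

Lemma period_dvd x : period x %| 2 ^ m.
Proof.
have [p_gt0 _ p_min] := periodP x.
case r_eq: (2 ^ m %% period x) => [|r]; first by rewrite /dvdn r_eq.
have : P (iter r.+1 h x) = P x.
  by rewrite -r_eq -prefix_iter_mod (prefix_iter_exp2 h_portrait).
by move/(p_min _ (ltn0Sn r)); have := ltn_pmod (2 ^ m) p_gt0; rewrite r_eq; lia.
Qed.

Lemma prefix_iter_inj x i j : i < period x -> j < period x ->
  P (iter i h x) = P (iter j h x) -> i = j.
Proof.
have [p_gt0 p_ret p_min] := periodP x.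
wlog le_ij : i j / i <= j.
  move=> W lt_i lt_j e; case/orP: (leq_total i j) => le; first exact: W.
  by apply/esym/W.
move=> lt_i lt_j e; case: (ltngtP i j) le_ij => // lt_ij _.
have : P (iter (j - i) h x) = P x.
  have := prefix_iter (period x - i) e.
  rewrite -!iterD (subnK (ltnW lt_i)) p_ret => ->.
  rewrite [RHS]prefix_iter_mod (_ : period x - i + j = j - i + period x); last by lia.
  by rewrite modnDr modn_small //; lia.
have d_gt0 : 0 < j - i by rewrite subn_gt0.
by move/(p_min _ d_gt0); lia.
Qed.

Definition carries x := exists n, P (iter n h x) = ws.

Lemma carries_prefix x y : P x = P y -> carries x -> carries y.
Proof. by move=> e [n en]; exists n; rewrite -(prefix_iter n e). Qed.

Lemma carriesS x : carries x <-> carries (h x).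
Proof.
split=> [[n en]|[n en]]; last by exists n.+1; rewrite iterSr.
exists (n + (2 ^ m).-1); rewrite -iterSr -addnS prednK ?expn_gt0 // iterD.
by rewrite (prefix_iter n (prefix_iter_exp2 h_portrait m x)).
Qed.

Fixpoint carry_count n x :=
  if n is k.+1 then carry_count k x + (P (iter k h x) == ws) else 0.

Lemma shift_iter n x :
  shift m (iter n h x) = iter (carry_count n x) adding_machine (shift m x).
Proof.
elim: n => [|n IH] //=; rewrite shift_h IH.
by case: (_ == ws); rewrite ?addn1 ?addn0.
Qed.

Lemma carry_count_prefix n x y : P x = P y -> carry_count n x = carry_count n y.
Proof. by move=> e; elim: n => //= n ->; rewrite (prefix_iter n e). Qed.

Lemma carry_count_period x : carries x -> carry_count (period x) x = 1.
Proof.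
move=> [n en]; have [p_gt0 _ _] := periodP x.
set j0 := n %% period x.
have lt_j0 : j0 < period x by rewrite ltn_pmod.
have ej0 : P (iter j0 h x) = ws by rewrite -prefix_iter_mod.
have carry_j j : j < period x -> (P (iter j h x) == ws) = (j == j0).
  move=> lt_j; apply/eqP/eqP => [ej|-> //].
  by apply: (@prefix_iter_inj x) => //; rewrite ej ej0.
suff count_k k : k <= period x -> carry_count k x = (j0 < k).
  by rewrite count_k ?lt_j0.
elim: k => [|k IH] lt_k //=; rewrite IH ?(ltnW lt_k) // carry_j //.
case: (ltngtP j0 k) => [lt_j0k|lt_kj0|->] /=; last by rewrite ltnSn.
  by rewrite ltnS ltnW.
by rewrite ltnS leqNgt lt_kj0.
Qed.

Lemma iter_period_mul x z j : carries x -> P z = P x ->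
  P (iter (j * period x) h z) = P z /\
  shift m (iter (j * period x) h z) = iter j adding_machine (shift m z).
Proof.
move=> cx; have [_ p_ret _] := periodP x; have count1 := carry_count_period cx.
elim: j z => [|j IH] z ez //.
rewrite mulSn iterD; have [e1 e2] := IH z ez.
have ez' : P (iter (j * period x) h z) = P x by rewrite e1.
split; first by rewrite (prefix_iter _ ez') p_ret ez.
by rewrite shift_iter (carry_count_prefix _ ez') count1 e2.
Qed.

Lemma iter_neq n : 0 < n -> exists x, iter n h x <> x.
Proof.
move=> n_gt0; pose x0 : cantor_space := nth false ws.
have cx0 : carries x0 by exists 0; rewrite /= /Defs.prefix -size_ws mkseq_nth.
exists x0 => fixed.
have fixed_mul k : iter (k * n) h x0 = x0.
  by elim: k => // k IH; rewrite mulSn iterD IH fixed.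
have [_] := iter_period_mul n cx0 (erefl (P x0)).
by rewrite mulnC fixed_mul => /esym; exact: odometer_aperiodic.
Qed.

Lemma carries_reach x y : carries x -> carries y -> exists n, P (iter n h x) = P y.
Proof.
move=> [a ea] [b eb]; exists (a + (2 ^ m * b - b)).
have le_b : b <= 2 ^ m * b by rewrite leq_pmull ?expn_gt0.
rewrite addnC iterD (prefix_iter _ (etrans ea (esym eb))) -iterD subnK //.
exact: prefix_iter_exp2_mul.
Qed.

Lemma carries_dense x : carries x -> carries `<=` closure (zorbit h x).
Proof.
move=> cx y cy B /nbhs_prefix[N sub].
have [n1 e1] := carries_reach cx cy; set x1 := iter n1 h x in e1.
have cx1 : carries x1 := carries_prefix (esym e1) cy.
have [j ej] := odometer_reach (shift m x1) (shift m y) (N - m).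
have [e2 e3] := iter_period_mul j cx1 (erefl (P x1)).
exists (iter (j * period x1 + n1) h x); split; first by exists (j * period x1 + n1); left.
apply: sub; apply: (@eq_prefixW _ _ (m + (N - m))); first lia.
by rewrite iterD -/x1 !prefixD e2 e1 e3 ej.
Qed.

Lemma not_carries_period x : ~ carries x -> exists2 k, k <= m & has_period h x (2 ^ k).
Proof.
move=> ncx; have [p_gt0 p_ret p_min] := periodP x.
have [k le_km ek] := dvdn_pfactor _ _ (isT : prime 2) (period_dvd x).
have count0 n : carry_count n x = 0.
  by elim: n => //= n ->; case: eqP => // en; case: ncx; exists n.
have iter_fixed n : P (iter n h x) = P x -> iter n h x = x.
  move=> e; apply: funext => i; case: (ltnP i m) => [lt_im|le_mi].
    by move/prefixP: e; apply.
  have := congr1 (fun t => t (i - m)) (shift_iter n x).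
  by rewrite count0 /shift /= subnKC.
exists k => //; rewrite -ek; split => //; split; first exact: iter_fixed.
move=> j /andP[j_gt0 lt_j] E; have := p_min j j_gt0; rewrite E => /(_ erefl).
by rewrite leqNgt lt_j.
Qed.

Lemma skew_odometer_dynamics :
  (forall n, 0 < n -> exists x, iter n h x <> x) /\
  exists U : set cantor_space,
    open U /\ closed U /\
    (forall x, U x <-> U (h x)) /\
    (forall x, U x -> U `<=` closure (zorbit h x)) /\
    exists n0, forall x, ~ U x -> exists k, k <= n0 /\ has_period h x (2 ^ k).
Proof.
split; first exact: iter_neq.
exists carries; split; first exact: prefix_invariant_open carries_prefix.
split; first exact: prefix_invariant_closed carries_prefix.
split; first exact: carriesS.
split; first exact: carries_dense.
by exists m => x /not_carries_period[k]; exists k.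
Qed.

End SkewOdometer.

Lemma all_id_nseq (s : seq bool) : all id s = (s == nseq (size s) true).
Proof. by elim: s => //= b s ->; rewrite eqseq_cons; case: b. Qed.

Section AddingMachineTreeAut.
Variables (g : seq bool -> seq bool) (m : nat).
Hypothesis g_aut : is_tree_aut g.
Hypothesis g_fix : forall (w : cantor_space) i, m <= i -> bd_act g w i = w i.

Lemma adding_machine_bd_act_portrait : has_portrait (adding_machine \o bd_act g).
Proof. exact: has_portrait_comp (bd_act_portrait g_aut) adding_machine_portrait. Qed.

(* The witness is [g^-1 (1^m)]: the carry of [a] passes letter [m] exactly
   when [g] maps the [m]-prefix to [1^m]. *)
Lemma shift_adding_machine_bd_act : exists2 ws, size ws = m & forall x,
  shift m ((adding_machine \o bd_act g) x) =
  if prefix x m == ws then adding_machine (shift m x) else shift m x.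
Proof.
case: (g_aut) => -[g' gK g'K] _.
exists (g' (nseq m true)); first by rewrite -(size_tree_aut g_aut) g'K size_nseq.
move=> x; apply: funext => k.
rewrite /shift /= /adding_machine forall_prefix prefixD all_cat.
have tail_eq : prefix (shift m (bd_act g x)) k = prefix (shift m x) k.
  by apply/prefixP => i _; rewrite /shift g_fix // leq_addr.
have head_all : all id (prefix (bd_act g x) m) = (prefix x m == g' (nseq m true)).
  rewrite bd_act_prefix // all_id_nseq size_tree_aut // size_prefix.
  by apply/eqP/eqP => [<-|->]; [rewrite gK | rewrite g'K].
by rewrite tail_eq head_all g_fix ?leq_addr // -forall_prefix; case: (_ == _).
Qed.

End AddingMachineTreeAut.

(* Most significant digit first. *)
Definition bits K k := mkseq (fun i => odd (k %/ 2 ^ (K - i.+1))) K.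
Definition nat_of_bits (w : seq bool) : nat := foldl (fun a (b : bool) => a.*2 + b) 0 w.

Lemma size_bits K k : size (bits K k) = K.
Proof. exact: size_mkseq. Qed.

Lemma bitsS K k : bits K.+1 k = rcons (bits K k./2) (odd k).
Proof.
rewrite /bits mkseqS subnn expn0 divn1; congr rcons.
apply/eq_in_map => i; rewrite mem_iota add0n => /andP[_ lt_iK].
by rewrite (_ : K.+1 - i.+1 = (K - i.+1).+1) ?expnS ?divnMA ?divn2 //; lia.
Qed.

Lemma nat_of_bits_rcons w b : nat_of_bits (rcons w b) = (nat_of_bits w).*2 + b.
Proof. by rewrite /nat_of_bits -cats1 foldl_cat. Qed.

Lemma nat_of_bits_lt w : nat_of_bits w < 2 ^ size w.
Proof.
elim/last_ind: w => [|w b IH] //; rewrite nat_of_bits_rcons size_rcons expnS.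
by move: IH; case: b => /=; rewrite -muln2; lia.
Qed.

Lemma nat_of_bitsK w : bits (size w) (nat_of_bits w) = w.
Proof.
elim/last_ind: w => [|w b IH] //; rewrite nat_of_bits_rcons size_rcons bitsS.
by rewrite addnC half_bit_double oddD odd_double /= IH; case: b.
Qed.

Lemma bits_inj K k1 k2 : k1 < 2 ^ K -> k2 < 2 ^ K -> bits K k1 = bits K k2 -> k1 = k2.
Proof.
elim: K k1 k2 => [|K IH] k1 k2; first by rewrite expn0; case: k1 => //; case: k2.
rewrite !bitsS expnS mul2n => lt_k1 lt_k2 /rcons_inj[/IH e1 e2].
by rewrite -(odd_double_half k1) -(odd_double_half k2) e2 e1 // ltn_half_double.
Qed.

Lemma bitsK K k : k < 2 ^ K -> nat_of_bits (bits K k) = k.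
Proof.
move=> lt_k; apply: (@bits_inj K) => //.
  by have := nat_of_bits_lt (bits K k); rewrite size_bits.
by have := nat_of_bitsK (bits K k); rewrite size_bits.
Qed.

Lemma nat_of_bits_sizeK w K : size w = K -> bits K (nat_of_bits w) = w.
Proof. by move=> <-; exact: nat_of_bitsK. Qed.

Lemma tree_aut_level_perm g m : is_tree_aut g -> exists pi : {perm 'I_(2 ^ m)},
  forall k : 'I_(2 ^ m), pi k = nat_of_bits (g (bits m k)) :> nat.
Proof.
move=> g_aut; have size_g k : size (g (bits m k)) = m.
  by rewrite size_tree_aut // size_bits.
have lt_img (k : 'I_(2 ^ m)) : nat_of_bits (g (bits m k)) < 2 ^ m.
  by have := nat_of_bits_lt (g (bits m k)); rewrite size_g.
have img_inj : injective (fun k => Ordinal (lt_img k)).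
  move=> k1 k2 /(congr1 val) /= e; apply/val_inj/(@bits_inj m); rewrite ?ltn_ord //.
  apply: (tree_aut_inj g_aut).
  by rewrite -(nat_of_bits_sizeK (size_g k1)) -(nat_of_bits_sizeK (size_g k2)) e.
by exists (perm img_inj) => k; rewrite permE.
Qed.

Lemma bits_exp2_sub2 n : bits n.+1 (2 ^ n.+1 - 2) = rcons (nseq n true) false.
Proof.
have := nat_of_bitsK (rcons (nseq n true) false).
rewrite size_rcons size_nseq nat_of_bits_rcons (_ : nat_of_bits _ = 2 ^ n - 1).
  by rewrite (_ : (2 ^ n - 1).*2 + false = 2 ^ n.+1 - 2) // expnS -muln2; lia.
elim: n => // n IH; rewrite -[in LHS](addn1 n) nseqD cats1 nat_of_bits_rcons IH.
by rewrite expnS -muln2 /=; have := expn_gt0 2 n; lia.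
Qed.

Lemma bits_one n : bits n.+1 1 = rcons (nseq n false) true.
Proof.
have := nat_of_bitsK (rcons (nseq n false) true).
rewrite size_rcons size_nseq nat_of_bits_rcons (_ : nat_of_bits _ = 0) //.
by elim: n => // n IH; rewrite -[in LHS](addn1 n) nseqD cats1 nat_of_bits_rcons IH.
Qed.

Lemma adding_machine_carry (x z : cantor_space) n :
  prefix x n.+1 = rcons (nseq n true) false ->
  prefix z n.+1 = rcons (nseq n false) true ->
  (forall i, n < i -> z i = x i) -> z = adding_machine x.
Proof.
move=> px pz tail; apply: funext => i; rewrite /adding_machine.
have letter (y : cantor_space) w j : prefix y n.+1 = w -> j <= n -> y j = nth false w j.
  by move=> <- le_jn; rewrite nth_prefix.
have ones_below j : j <= n -> [forall k : 'I_j, x k].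
  move=> le_jn; apply/forallP => k; have lt_kn := leq_trans (ltn_ord k) le_jn.
  by rewrite (letter _ _ _ px (ltnW lt_kn)) nth_rcons size_nseq lt_kn nth_nseq lt_kn.
have [lt_in|lt_ni|->] := ltngtP i n.
- have le_in := ltnW lt_in.
  rewrite (ones_below _ le_in) (letter _ _ _ px le_in) (letter _ _ _ pz le_in).
  by rewrite !nth_rcons !size_nseq lt_in !nth_nseq lt_in.
- rewrite tail //; case: forallP => // /(_ (Ordinal lt_ni)).
  by rewrite (letter _ _ _ px (leqnn n)) nth_rcons size_nseq ltnn eqxx.
- rewrite (ones_below _ (leqnn n)) (letter _ _ _ px (leqnn n)) (letter _ _ _ pz (leqnn n)).
  by rewrite !nth_rcons !size_nseq ltnn eqxx.
Qed.

Local Open Scope ring_scope.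

Section BinaryExpansion.
Variable R : realType.
Implicit Types x y : R.

Definition dfloor (K : nat) x : nat := Num.truncn (x * 2 ^+ K).

Definition binary_expansion x : cantor_space := fun i => odd (dfloor i.+1 x).

Lemma dfloorP x K (n : nat) : 0 <= x ->
  dfloor K x = n <-> n%:R <= x * 2 ^+ K < n.+1%:R.
Proof.
move=> x0; split => [<-|/truncn_def //]; apply: truncn_itv.
by rewrite mulr_ge0 // exprn_ge0.
Qed.

Lemma dfloor_half x K : 0 <= x -> dfloor K x = (dfloor K.+1 x)./2.
Proof.
move=> x0; set n := dfloor K.+1 x.
have /andP[lo hi] : n%:R <= x * 2 ^+ K.+1 < n.+1%:R by apply/dfloorP.
rewrite exprS mulrCA mulrC in lo hi.
apply/dfloorP => //; have := odd_double_half n => n_eq; apply/andP; split.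
  by rewrite -(ler_pM2r (_ : 0 < 2 :> R)) // (le_trans _ lo) // -natrM ler_nat; lia.
by rewrite -(ltr_pM2r (_ : 0 < 2 :> R)) // (lt_le_trans hi) // -natrM ler_nat; lia.
Qed.

Lemma dfloor_divn x K k : 0 <= x -> dfloor K x = (dfloor (K + k) x %/ 2 ^ k)%N.
Proof.
move=> x0; elim: k => [|k IH]; first by rewrite addn0 expn0 divn1.
by rewrite IH addnS (dfloor_half _ x0) -divn2 -divnMA expnS.
Qed.

Lemma prefix_binary_expansion x K : 0 <= x ->
  prefix (binary_expansion x) K = bits K (dfloor K x).
Proof.
move=> x0; apply/eq_in_map => i; rewrite mem_iota add0n => /andP[_ lt_iK].
by rewrite /binary_expansion (dfloor_divn _ (K - i.+1) x0) subnKC.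
Qed.

Lemma dfloor_lt x K : 0 <= x < 1 -> (dfloor K x < 2 ^ K)%N.
Proof.
move=> /andP[x0 x1]; rewrite /dfloor truncn_lt_nat ?mulr_ge0 ?exprn_ge0 //.
by rewrite natrX gtr_pMl // exprn_gt0.
Qed.

Lemma dfloorD x y K (a b : nat) : 0 <= x -> 0 <= y ->
  x * 2 ^+ K + a%:R = y * 2 ^+ K + b%:R -> (dfloor K x + a = dfloor K y + b)%N.
Proof.
move=> x0 y0 e.
have x_ge0 : 0 <= x * 2 ^+ K by rewrite mulr_ge0 // exprn_ge0.
have y_ge0 : 0 <= y * 2 ^+ K by rewrite mulr_ge0 // exprn_ge0.
rewrite /dfloor -[in LHS](@natrK R a) -[in RHS](@natrK R b).
rewrite addnC -truncnD ?natr_nat ?nnegrE // addnC -truncnD ?natr_nat ?nnegrE //.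
by rewrite addrC e addrC.
Qed.

Lemma binary_expansion_shift x y K (a b : nat) : 0 <= x -> 0 <= y ->
  x * 2 ^+ K + a%:R = y * 2 ^+ K + b%:R ->
  forall i, (K <= i)%N -> binary_expansion x i = binary_expansion y i.
Proof.
move=> x0 y0 exy i le_Ki; rewrite /binary_expansion.
set e := (i.+1 - K)%N.
have odd_e : odd (2 ^ e) = false by rewrite oddX /e subn_eq0 ltnNge le_Ki.
have -> : i.+1 = (K + e)%N by rewrite /e subnKC // leqW.
have : (dfloor (K + e) x + a * 2 ^ e = dfloor (K + e) y + b * 2 ^ e)%N.
  by apply: dfloorD => //; rewrite exprD !natrM !natrX !mulrA -!mulrDl exy.
by move/(congr1 odd); rewrite !oddD !oddM odd_e !andbF !addbF.
Qed.

Lemma binary_expansion_translate (m j : nat) x : 0 <= x < 1 -> (j < 2 ^ m)%N ->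
  let y := x + (j%:R - (dfloor m x)%:R) / (2 ^ m)%N%:R in
  0 <= y < 1 /\ prefix (binary_expansion y) m = bits m j /\
  forall i, (m <= i)%N -> binary_expansion y i = binary_expansion x i.
Proof.
move=> /andP[x0 x1] lt_j y; set k := dfloor m x.
have /andP[lo hi] : k%:R <= x * 2 ^+ m < k.+1%:R by apply/dfloorP.
have P_gt0 : 0 < (2 : R) ^+ m by rewrite exprn_gt0.
have ey : y * 2 ^+ m + k%:R = x * 2 ^+ m + j%:R.
  by rewrite /y natrX; field; rewrite lt0r_neq0.
have y_lo : j%:R <= y * 2 ^+ m by lra.
have y_hi : y * 2 ^+ m < j.+1%:R by rewrite -natr1 -[k.+1]addn1 natrD in hi *; lra.
have y0 : 0 <= y by rewrite -(pmulr_lge0 _ P_gt0) (le_trans _ y_lo).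
have y1 : y < 1.
  by rewrite -(ltr_pM2r P_gt0) mul1r (lt_le_trans y_hi) // -natrX ler_nat.
split; first by rewrite y0 y1.
have Dy : dfloor m y = j by apply/dfloorP => //; rewrite y_lo y_hi.
split; first by rewrite prefix_binary_expansion // Dy.
exact: binary_expansion_shift ey.
Qed.

Lemma vNK_level_exists y : 0 <= y < 1 -> exists n, vNK_level y n.
Proof.
move=> /andP[y0 y1].
have below_1 : exists n, y < 1 - (2%:R : R) ^- n.
  exists (Num.truncn ((1 - y)^-1)).+1.
  have lt_1y : (1 - y)^-1 < 2 ^+ (Num.truncn ((1 - y)^-1)).+1.
    by rewrite (lt_le_trans (truncnS_gt _)) // -natrX ler_nat ltnW // ltn_expl.
  by move: lt_1y; rewrite invf_plt ?posrE ?exprn_gt0 ?subr_gt0 //; lra.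
case: (ex_minnP below_1) => [[|n]]; first by rewrite expr0 invr1; lra.
move=> hi min; exists n.+1; do !split => //=.
by rewrite leNgt; apply/negP => /min; rewrite ltnn.
Qed.

Lemma vNK_level_uniq y n1 n2 : vNK_level y n1 -> vNK_level y n2 -> n1 = n2.
Proof.
wlog le_n12 : n1 n2 / (n1 <= n2)%N.
  by move=> W h1 h2; case/orP: (leq_total n1 n2) => le; [exact: W | apply/esym/W].
move=> [_ [_ hi1]] [n2_ge1 [lo2 _]]; case: (ltngtP n1 n2) le_n12 => // lt_n12 _.
have : (2 : R) ^+ n1 <= 2 ^+ n2.-1 by rewrite ler_eXn2l // ?ltr1n; lia.
rewrite -lef_pV2 ?posrE ?exprn_gt0 // => le_inv.
exfalso; move: hi1 lo2 le_inv; move: (2 ^- n1) (2 ^- n2.-1) => a b; lra.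
Qed.

Lemma vNK_indexE y n : vNK_level y n -> vNK_index y = n.
Proof. by move=> ln; apply: xget_unique => // k lk; exact: vNK_level_uniq lk ln. Qed.

Lemma dfloor_vNK_level y n : 0 <= y -> vNK_level y n.+1 ->
  dfloor n.+1 y = (2 ^ n.+1 - 2)%N.
Proof.
move=> y0 [_ [/= lo hi]]; apply/dfloorP => //.
have two_le : (2 <= 2 ^ n.+1)%N by rewrite expnS; have := expn_gt0 2 n; lia.
rewrite (_ : (2 ^ n.+1 - 2).+1 = 2 ^ n.+1 - 1)%N; last by lia.
rewrite !natrB ?natrX; try lia.
have t_gt0 : 0 < (2 : R) ^+ n by rewrite exprn_gt0.
rewrite exprS in hi *; move: ((2 : R) ^+ n) lo hi t_gt0 => t lo hi t_gt0.
have lo' : (1 - t^-1) * (2 * t) <= y * (2 * t) by rewrite ler_pM2r ?mulr_gt0.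
have hi' : y * (2 * t) < (1 - (2 * t)^-1) * (2 * t) by rewrite ltr_pM2r ?mulr_gt0.
have E1 : (1 - t^-1) * (2 * t) = 2 * t - 2 by field; rewrite lt0r_neq0.
have E2 : (1 - (2 * t)^-1) * (2 * t) = 2 * t - 1 by field; rewrite lt0r_neq0.
by rewrite E1 in lo'; rewrite E2 in hi'; apply/andP; split; lra.
Qed.

Lemma vNK_scale y n : vNK_level y n ->
  vNK y * 2 ^+ n + 2 ^+ n = y * 2 ^+ n + 3.
Proof.
move=> ln; rewrite /vNK (vNK_indexE ln); field.
by rewrite lt0r_neq0 ?exprn_gt0.
Qed.

Lemma binary_expansion_vNK y : 0 <= y < 1 ->
  binary_expansion (vNK y) = adding_machine (binary_expansion y).
Proof.
move=> y01; have /andP[y0 _] := y01.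
have [[|n] ln] := vNK_level_exists y01; first by case: ln.
have Dy := dfloor_vNK_level y0 ln; have ez := vNK_scale ln.
have /andP[lo hi] := (dfloorP _ _ y0).1 Dy.
have two_le : (2 <= 2 ^ n.+1)%N by rewrite expnS; have := expn_gt0 2 n; lia.
have Ey : ((2 ^ n.+1 - 2)%N%:R : R) = 2 ^+ n.+1 - 2 by rewrite natrB ?natrX.
have Ey' : ((2 ^ n.+1 - 2).+1%:R : R) = 2 ^+ n.+1 - 1.
  by rewrite (_ : (2 ^ n.+1 - 2).+1 = 2 ^ n.+1 - 1)%N ?natrB ?natrX //; lia.
rewrite Ey in lo; rewrite Ey' in hi.
have P_gt0 : 0 < (2 : R) ^+ n.+1 by rewrite exprn_gt0.
have z0 : 0 <= vNK y by rewrite -(pmulr_lge0 _ P_gt0); lra.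
have Dz : dfloor n.+1 (vNK y) = 1%N by apply/dfloorP => //; lra.
apply: (adding_machine_carry (n := n)).
- by rewrite prefix_binary_expansion // Dy bits_exp2_sub2.
- by rewrite prefix_binary_expansion // Dz bits_one.
- by move=> i; apply: (binary_expansion_shift (a := 2 ^ n.+1) (b := 3)); rewrite // natrX.
Qed.

End BinaryExpansion.

Section Conjugacy.
Variable R : realType.
Local Notation phi := (@binary_expansion R).

Lemma binary_expansion_rot_pi g m (pi : {perm 'I_(2 ^ m)}) (x : R) :
  is_tree_aut g -> (forall w i, (m <= i)%N -> bd_act g w i = w i) ->
  (forall k : 'I_(2 ^ m), pi k = nat_of_bits (g (bits m k)) :> nat) ->
  0 <= x < 1 -> 0 <= rot_pi pi x < 1 /\ phi (rot_pi pi x) = bd_act g (phi x).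
Proof.
move=> g_aut g_fix piE x01; rewrite /rot_pi.
rewrite (_ : Num.truncn (x * (2 ^ m)%:R) = dfloor m x); last by rewrite /dfloor natrX.
case: insubP => [k _ ek|]; last by rewrite dfloor_lt.
have lt_img : (nat_of_bits (g (bits m k)) < 2 ^ m)%N by rewrite -piE.
rewrite piE; have [y01 [prefix_y tail_y]] := binary_expansion_translate x01 lt_img.
split; first exact: y01.
apply: funext => i; case: (ltnP i m) => [lt_im|le_mi]; last first.
  by rewrite tail_y // g_fix.
have x0 : 0 <= x by case/andP: x01.
move: i lt_im; apply/prefixP.
rewrite prefix_y bd_act_prefix // prefix_binary_expansion // -ek.
by rewrite nat_of_bits_sizeK // size_tree_aut // size_bits.
Qed.

Lemma rotated_odometer_conjugacy g m :
  is_tree_aut g -> (forall w i, (m <= i)%N -> bd_act g w i = w i) ->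
  exists pi : {perm 'I_(2 ^ m)}, forall x : R, `[0, 1[%classic x ->
    phi (rot_odometer pi x) = (adding_machine \o bd_act g) (phi x).
Proof.
move=> g_aut g_fix; have [pi piE] := tree_aut_level_perm m g_aut.
exists pi => x; rewrite /= in_itv /= => x01.
have [y01 ey] := binary_expansion_rot_pi g_aut g_fix piE x01.
by rewrite /rot_odometer binary_expansion_vNK // ey.
Qed.

End Conjugacy.

Section ExpansionMeasure.
Variable R : realType.
Local Notation phi := (@binary_expansion R).
Local Notation lambda := (@lebesgue_measure R).

Lemma binary_expansion_preimage_cylinder (w : seq bool) :
  `[0, 1[%classic `&` phi @^-1` cylinder w =
  `[(nat_of_bits w)%:R / 2 ^+ size w, (nat_of_bits w).+1%:R / 2 ^+ size w[%classic.
Proof.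
have P_gt0 : 0 < (2 : R) ^+ size w by rewrite exprn_gt0.
apply/seteqP; split => x; rewrite /cylinder /= !in_itv /=.
  move=> [/andP[x0 x1]]; rewrite prefix_binary_expansion // => e.
  have Dx : dfloor (size w) x = nat_of_bits w.
    by have := congr1 nat_of_bits e; rewrite bitsK // dfloor_lt ?x0.
  have /andP[lo hi] := (dfloorP _ _ x0).1 Dx.
  by rewrite ler_pdivrMr // ltr_pdivlMr // lo hi.
rewrite ler_pdivrMr // ltr_pdivlMr // => /andP[lo hi].
have x0 : 0 <= x by rewrite -(pmulr_lge0 _ P_gt0) (le_trans _ lo).
have x1 : x < 1.
  rewrite -(ltr_pM2r P_gt0) mul1r (lt_le_trans hi) // -natrX ler_nat.
  exact: nat_of_bits_lt.
split; first by rewrite x0 x1.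
rewrite prefix_binary_expansion // (_ : dfloor _ x = nat_of_bits w) ?nat_of_bitsK //.
by apply/dfloorP => //; rewrite lo hi.
Qed.

Lemma measurable_binary_expansion :
  measurable_fun (`[0, 1[%classic : set R) (phi : R -> bdT).
Proof.
apply: (@measurability _ _ _ bdT _ _ cylinders) => //.
move=> _ [_ [w _ <-] <-]; rewrite binary_expansion_preimage_cylinder.
exact: measurable_itv.
Qed.

Definition expansion_measure (B : set bdT) : \bar R :=
  lambda (`[0, 1[%classic `&` phi @^-1` B).

Let expansion_measure0 : expansion_measure set0 = 0%E.
Proof. by rewrite /expansion_measure preimage_set0 setI0 measure0. Qed.

Let expansion_measure_ge0 B : (0 <= expansion_measure B)%E.
Proof. exact: measure_ge0. Qed.

Let expansion_measure_sigma_additive : semi_sigma_additive expansion_measure.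
Proof.
move=> F mF tF mUF; rewrite /expansion_measure preimage_bigcup setI_bigcupr.
have mI : measurable (`[0, 1[%classic : set R) by exact: measurable_itv.
apply: measure_semi_sigma_additive.
- by move=> n; exact: measurable_binary_expansion mI _ (mF n).
- apply/trivIsetP => i j _ _ ij; rewrite setIACA setIid -preimage_setI.
  by move/trivIsetP : tF => /(_ _ _ _ _ ij) ->//; rewrite preimage_set0 setI0.
- by rewrite -setI_bigcupr -preimage_bigcup; exact: measurable_binary_expansion mI _ mUF.
Qed.

HB.instance Definition _ := isMeasure.Build _ _ _ expansion_measure
  expansion_measure0 expansion_measure_ge0 expansion_measure_sigma_additive.

Lemma expansion_measure_cylinder w :
  expansion_measure (cylinder w) = ((2 : R) ^- size w)%:E.
Proof.
have P_gt0 : 0 < (2 : R) ^+ size w by rewrite exprn_gt0.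
rewrite /expansion_measure binary_expansion_preimage_cylinder lebesgue_measure_itv.
rewrite /= lte_fin ltr_pM2r ?invr_gt0 // ltr_nat ltnSn -EFinB; congr EFin.
by field; rewrite lt0r_neq0.
Qed.

Lemma expansion_measure_bernoulli (mu : {measure set bdT -> \bar R}) :
  is_bernoulli_measure mu -> forall B : set bdT, measurable B -> expansion_measure B = mu B.
Proof.
move=> mu_bern.
pose G : set (set bdT) := [set C | C = set0 \/ cylinders C].
have G_gen : @measurable _ bdT = <<s G >>.
  apply/seteqP; split.
    by apply: sub_smallest2r; [exact: smallest_sigma_algebra | move=> C; right].
  apply: smallest_sub; first exact: smallest_sigma_algebra.
  by move=> C [->|cC]; [exact: measurable0 | exact: sub_sigma_algebra].
have G_setI : setI_closed G.
  move=> _ _ [->|[u _ <-]] [->|[v _ <-]]; rewrite ?set0I ?setI0; try by left.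
  by case: (setI_cylinder u v) => ->; [left | right; exists u | right; exists v].
have G_T : G setT by right; exists [::] => //; apply/seteqP; split.
apply: (measure_unique G (fun _ => setT) G_gen G_setI (fun=> G_T)).
- by rewrite bigcup_const //; exists 0%N.
- move=> A [->|[w _ <-]]; first by rewrite !measure0.
  by rewrite [LHS]/= expansion_measure_cylinder mu_bern.
- move=> _; rewrite [X in (X < _)%E]/= /expansion_measure preimage_setT setIT.
  by rewrite lebesgue_measure_itv /= lte_fin ltr01 ltry.
Qed.

Lemma binary_expansion_inj (x y : R) : `[0, 1[%classic x -> `[0, 1[%classic y ->
  phi x = phi y -> x = y.
Proof.
rewrite /= !in_itv /= => /andP[x0 x1] /andP[y0 y1] e.
have D_eq K : dfloor K x = dfloor K y.
  have := congr1 (prefix^~ K) e; rewrite /= !prefix_binary_expansion //.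
  by apply: bits_inj; apply: dfloor_lt; rewrite ?x0 ?y0.
apply/eqP; apply/negPn/negP => neq_xy.
have d_gt0 : 0 < `|x - y| by rewrite normr_gt0 subr_eq0.
set M := Num.truncn (`|x - y|^-1).
have P_gt0 : 0 < (2 : R) ^+ M.+1 by rewrite exprn_gt0.
have big : 1 < 2 ^+ M.+1 * `|x - y|.
  rewrite -[X in X < _](mulVf (lt0r_neq0 d_gt0)) ltr_pM2r //.
  by rewrite (lt_le_trans (truncnS_gt _)) // -natrX ler_nat ltnW // ltn_expl.
have /andP[lox hix] := (dfloorP _ _ x0).1 (erefl (dfloor M.+1 x)).
have /andP[loy hiy] := (dfloorP _ _ y0).1 (erefl (dfloor M.+1 y)).
rewrite D_eq in lox hix.
have : `|x * 2 ^+ M.+1 - y * 2 ^+ M.+1| < 1.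
  by rewrite ltr_norml; apply/andP; split; rewrite -natr1 in hix hiy; lra.
by rewrite -mulrBl normrM (gtr0_norm P_gt0) mulrC; lra.
Qed.

End ExpansionMeasure.

Theorem theorem1p8 (R : realType) (mu : {measure set bdT -> \bar R})
  (g : seq bool -> seq bool) (m : nat) :
  is_bernoulli_measure mu ->
  is_tree_aut g ->
  (1 <= m)%N ->
  (forall (w : cantor_space) (i : nat), (m <= i)%N -> bd_act g w i = w i) ->
  let h := adding_machine \o bd_act g in
  (* (1) *)
  (exists (pi : {perm 'I_(2 ^ m)}) (phi : R -> cantor_space),
      (forall x y, `[0, 1[%classic x -> `[0, 1[%classic y -> phi x = phi y -> x = y) /\
      (forall B : set bdT, measurable B ->
         measurable (`[0, 1[%classic `&` phi @^-1` B) /\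
         (@lebesgue_measure R) (`[0, 1[%classic `&` phi @^-1` B) = mu B) /\
      (forall x, `[0, 1[%classic x -> phi (rot_odometer pi x) = h (phi x))) /\
  (* (2) *)
  ((forall n : nat, (0 < n)%N -> exists x, iter n h x <> x) /\
   exists U : set cantor_space,
     open U /\ closed U /\
     (forall x, U x <-> U (h x)) /\
     (forall x, U x -> U `<=` closure (zorbit h x)) /\
     exists n0 : nat, forall x, ~ U x ->
       exists k : nat, (k <= n0)%N /\ has_period h x (2 ^ k)).
Proof.
move=> mu_bern g_aut _ g_fix h.
have [ws size_ws shift_h] := shift_adding_machine_bd_act g_aut g_fix.
have h_portrait := adding_machine_bd_act_portrait g_aut.
split; last exact: skew_odometer_dynamics h_portrait size_ws shift_h.
have [pi phi_conj] := rotated_odometer_conjugacy R g_aut g_fix.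
exists pi, (@binary_expansion R); split; first exact: binary_expansion_inj.
split; last exact: phi_conj.
move=> B mB; split; first exact: measurable_binary_expansion.
exact: expansion_measure_bernoulli.
Qed.
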